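(* Let $s \geq 1$, $\Gamma = (\gamma_1, \ldots, \gamma_s), \alpha = (\alpha_1, \ldots, \alpha_s) \in \mathbb{Z}^s$, and $u \in \mathbb{Z}_{\geq 0}$. For any fixed $\Pi \subset [s]$ with $|\Pi| > u$, \[ \sum_{\substack{\sigma \in \mathfrak{S}_s \\ M \subset \Pi}} (-1)^{|M|} \operatorname{sgn}(\sigma)\, \Delta_s(\sigma \cdot^\alpha \Gamma - 1_M)\, |M|^u = 0. \]
   Context: For $\sigma \in \mathfrak{S}_s$ and $\Gamma \in \mathbb{Z}^s$, $\sigma \cdot \Gamma = (\gamma_{\sigma^{-1}(1)}, \ldots, \gamma_{\sigma^{-1}(s)})$, and $\sigma \cdot^\alpha \Gamma = \sigma \cdot (\Gamma + \alpha) - \alpha$, i.e. its $\ell$-th entry is $\gamma_{\sigma^{-1}(\ell)} + \alpha_{\sigma^{-1}(\ell)} - \alpha_\ell$. $\Delta_s(y_1, \ldots, y_s) = \prod_{1 \leq v < w \leq s}(y_w - y_v)$. $1_M \in \{0,1\}^s$ is the indicator vector of $M \subset [s]$. The convention $0^0 = 1$ is used. *)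

From mathcomp Require Import all_boot all_order all_algebra all_fingroup.
Set Implicit Arguments. Unset Strict Implicit. Unset Printing Implicit Defensive.
Import GRing.Theory Num.Theory.
Local Open Scope ring_scope.

Definition perm_act (s : nat) (sigma : {perm 'I_s}) (G : 'I_s -> int) : 'I_s -> int :=
  fun l => G ((sigma^-1)%g l).

Definition perm_act_alpha (s : nat) (sigma : {perm 'I_s}) (alpha G : 'I_s -> int)
  : 'I_s -> int :=
  fun l => perm_act sigma (fun i => G i + alpha i) l - alpha l.

Definition Delta (s : nat) (y : 'I_s -> int) : int :=
  \prod_(v < s) \prod_(w < s | (v < w)%N) (y w - y v).

Definition indic (s : nat) (M : {set 'I_s}) : 'I_s -> int :=
  fun l => (l \in M)%:R.

Definition sgnp (s : nat) (sigma : {perm 'I_s}) : int := (-1) ^+ odd_perm sigma.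

From mathcomp Require Import all_boot all_order all_algebra all_fingroup.
Set Implicit Arguments. Unset Strict Implicit. Unset Printing Implicit Defensive.
Import GRing.Theory.
Local Open Scope ring_scope.

(* With x = Gamma + alpha and c = alpha + 1_M, the inner sum over sigma is
   sum_sigma sgn(sigma) Delta(sigma . x - c), and it does not depend on c.
   Writing Delta as a Vandermonde determinant, sgn(sigma) Delta(sigma . x - c)
   is the determinant of the matrix whose column j is column j of U_(c (sigma j)) V,
   where V is the Vandermonde matrix of x and U_c is the lower unitriangular
   binomial matrix turning the powers of x into the powers of x - c.  Polarization
   (inclusion-exclusion on the columns) rewrites the sum over sigma as
   (-1)^s sum_S (-1)^|S| det(sum_(i in S) U_(c i)) det V, and
   det(sum_(i in S) U_(c i)) = |S|^s, so the sum equals s! Delta(x).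
   It remains that sum_(M in Pi) (-1)^|M| |M|^u = 0 for u < |Pi|: counting
   |M|^u as the maps [u] -> M, for each map h the alternating sum over the
   M between the image of h and Pi vanishes. *)

Section SignedSubsetSums.
Variables (R : pzRingType) (T : finType).

Lemma sum_sign_interval_eq0 (A B : {set T}) (x : T) : x \in B -> x \notin A ->
  \sum_(M : {set T} | (A \subset M) && (M \subset B)) (-1) ^+ #|M| = 0 :> R.
Proof.
move=> xB xA; rewrite (bigID (fun M : {set T} => x \in M)) /=.
rewrite (reindex_onto (fun N => x |: N) (fun M => M :\ x)) /=; last first.
  by move=> M /andP[_ xM]; rewrite setD1K.
apply/eqP; rewrite addr_eq0 -sumrN; apply/eqP; apply: eq_big => N.
  rewrite setU11 andbT; case xN: (x \in N).
    by rewrite andbF; apply/negbTE/negP => /andP[_ /eqP/setP/(_ x)]; rewrite !inE eqxx xN.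
  have AxA : A :\ x = A by apply/setDidPl; rewrite disjoint_sym disjoints1.
  by rewrite setU1K ?xN // eqxx !andbT -subDset AxA subUset sub1set xB.
by move=> /andP[_ /eqP <-]; rewrite cardsU1 setD11 exprS mulN1r.
Qed.

Lemma sum_sign_interval_lt_eq0 (A B : {set T}) : (#|A| < #|B|)%N ->
  \sum_(M : {set T} | (A \subset M) && (M \subset B)) (-1) ^+ #|M| = 0 :> R.
Proof.
move=> ltAB; have [sAB | nsAB] := boolP (A \subset B); last first.
  rewrite big_pred0 // => M; apply/negbTE.
  by apply: contra nsAB => /andP[/subset_trans]; apply.
have /subsetPn[x xB xA] : ~~ (B \subset A).
  by apply: contraTN ltAB => /subset_leq_card; rewrite leqNgt.
exact: sum_sign_interval_eq0 xB xA.
Qed.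

Lemma ffun_on_imset (aT : finType) (h : {ffun aT -> T}) (S : {set T}) :
  (h \in ffun_on (mem S)) = ([set h i | i in aT] \subset S).
Proof.
apply/ffun_onP/subsetP => hS y; last exact/hS/imset_f.
by case/imsetP => i _ ->; apply: hS.
Qed.

Lemma sum_sign_cardX_eq0 (Pi : {set T}) (u : nat) : (u < #|Pi|)%N ->
  \sum_(M : {set T} | M \subset Pi) (-1) ^+ #|M| * #|M|%:R ^+ u = 0 :> R.
Proof.
move=> ltuPi.
have cardM (M : {set T}) :
    #|M|%:R ^+ u = \sum_(h : {ffun 'I_u -> T} | h \in ffun_on (mem M)) 1 :> R.
  by rewrite sumr_const -natrX -[X in (_ ^ X)%N]card_ord -card_ffun_on.
under eq_bigr => M _ do rewrite cardM mulr_sumr.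
rewrite (exchange_big_dep predT) //=; apply: big1 => h _.
under eq_bigl => M do rewrite andbC ffun_on_imset.
under eq_bigr => M _ do rewrite mulr1.
apply: sum_sign_interval_lt_eq0; apply: leq_ltn_trans ltuPi.
by rewrite -[u in (_ <= u)%N]card_ord leq_imset_card.
Qed.

End SignedSubsetSums.

Section ColumnMixtures.
Variables (R : comPzRingType) (n : nat).

Definition col_mix (B : 'I_n -> 'M[R]_n) (h : 'I_n -> 'I_n) : 'M[R]_n :=
  \matrix_(k, j) B (h j) k j.

Lemma det_sum_col_mix (B : 'I_n -> 'M[R]_n) (S : {set 'I_n}) :
  \det (\sum_(i in S) B i) =
  \sum_(h : {ffun 'I_n -> 'I_n} | h \in ffun_on (mem S)) \det (col_mix B h).
Proof.
rewrite -det_tr; under [RHS]eq_bigr => h _ do rewrite -det_tr.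
rewrite /determinant exchange_big /=; apply: eq_bigr => t _.
rewrite -mulr_sumr; congr (_ * _).
under eq_bigr => j _ do rewrite mxE summxE.
by rewrite bigA_distr_big; apply: eq_bigr => h _; apply: eq_bigr => j _; rewrite !mxE.
Qed.

Lemma sum_sign_ffun_on (h : {ffun 'I_n -> 'I_n}) :
  \sum_(S : {set 'I_n} | h \in ffun_on (mem S)) (-1) ^+ #|S| =
  (if injectiveb h then (-1) ^+ n else 0) :> R.
Proof.
under eq_bigl => S do rewrite ffun_on_imset -[_ \subset S]andbT -(subsetT S).
have [/injectiveP h_inj | /injectiveP h_ninj] := boolP (injectiveb h).
  have imT : [set h i | i in 'I_n] = [set: 'I_n].
    by apply/eqP; rewrite eqEcard subsetT cardsT (card_in_imset (in2W h_inj)) leqnn.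
  rewrite imT (big_pred1 [set: 'I_n]) ?cardsT ?card_ord // => S.
  by rewrite subsetT andbT subTset.
apply: sum_sign_interval_lt_eq0; rewrite cardsT ltn_neqAle leq_imset_card andbT.
by apply: contra_notN h_ninj => card_im; apply: in2T; apply/imset_injP.
Qed.

Lemma sum_perm_det_col_mix (B : 'I_n -> 'M[R]_n) :
  (-1) ^+ n * \sum_(t : 'S_n) \det (col_mix B t) =
  \sum_(S : {set 'I_n}) (-1) ^+ #|S| * \det (\sum_(i in S) B i).
Proof.
under [RHS]eq_bigr => S _ do rewrite det_sum_col_mix mulr_sumr.
rewrite [RHS](exchange_big_dep predT) //=.
under eq_bigr => h _ do rewrite -mulr_suml sum_sign_ffun_on.
rewrite (bigID (fun h : {ffun 'I_n -> 'I_n} => injectiveb h)) /=.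
rewrite [X in _ = _ + X]big1 ?addr0 => [|h /negbTE->]; last by rewrite mul0r.
rewrite mulr_sumr (reindex_omap (val : 'S_n -> {ffun 'I_n -> 'I_n}) insub) /=.
  by apply: eq_big => [t|t _]; rewrite (valP t) ?valK ?eqxx -?pvalE.
by move=> h hinj; rewrite insubT.
Qed.

End ColumnMixtures.

Section ShiftedVandermonde.
Variables (R : comPzRingType) (n : nat).

Definition shift_mx (c : R) : 'M[R]_n := \matrix_(k, m) ((- c) ^+ (k - m) *+ 'C(k, m)).

Lemma mul_shift_Vandermonde (c : R) (p : nat) (a : 'rV[R]_p) :
  shift_mx c *m Vandermonde n a = Vandermonde n (a - const_mx c).
Proof.
apply/matrixP => k j; rewrite !mxE addrC exprDn.
rewrite (big_ord_widen n (fun m => (- c) ^+ (k - m) * a 0 j ^+ m *+ 'C(k, m))) //.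
rewrite [RHS]big_mkcond; apply: eq_bigr => m _; rewrite !mxE.
by case: ltnP => [_|lt_k_m]; rewrite ?mulrnAl // bin_small ?mulr0n.
Qed.

Lemma det_sum_shift_mx (I : finType) (c : I -> R) (S : {set I}) :
  \det (\sum_(i in S) shift_mx (c i)) = #|S|%:R ^+ n.
Proof.
rewrite det_trig; last first.
  apply/is_trig_mxP => k m lt_k_m; rewrite summxE big1 // => i _.
  by rewrite mxE bin_small ?mulr0n.
rewrite -[n in _ ^+ n]card_ord -prodr_const; apply: eq_bigr => k _.
by rewrite summxE (eq_bigr (fun=> 1)) ?sumr_const // => i _; rewrite mxE subnn binn.
Qed.

Lemma det_col_mix_shift_Vandermonde (x c : 'I_n -> R) (t : 'S_n) :
  \det (col_mix (fun i => shift_mx (c i) *m Vandermonde n (\row_j x j)) t) =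
  (-1) ^+ t * \det (Vandermonde n (\row_l (x ((t^-1)%g l) - c l))).
Proof.
have -> : col_mix (fun i => shift_mx (c i) *m Vandermonde n (\row_j x j)) t =
          col_perm t (Vandermonde n (\row_l (x ((t^-1)%g l) - c l))).
  by apply/matrixP => k j; rewrite [LHS]mxE mul_shift_Vandermonde !mxE permK.
by rewrite col_permE det_mulmx det_perm odd_permV mulrC.
Qed.

Lemma sum_sign_cardX_self :
  \sum_(S : {set 'I_n}) (-1) ^+ #|S| * #|S|%:R ^+ n = (-1) ^+ n * n`!%:R :> R.
Proof.
have col_mix1 (h : 'I_n -> 'I_n) : col_mix (fun=> 1%:M) h = 1%:M :> 'M[R]_n.
  by apply/matrixP => k j; rewrite !mxE.
have := sum_perm_det_col_mix (fun=> 1%:M : 'M[R]_n).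
under eq_bigr => t _ do rewrite col_mix1 det1.
rewrite sumr_const card_Sn => ->; apply: eq_bigr => S _.
by rewrite sumr_const -(raddfMn (@scalar_mx R n)) det_scalar.
Qed.

End ShiftedVandermonde.

Lemma sum_perm_det_Vandermonde_shift (R : comPzRingType) (n : nat) (x c : 'I_n -> R) :
  \sum_(t : 'S_n) (-1) ^+ t * \det (Vandermonde n (\row_l (x ((t^-1)%g l) - c l))) =
  n`!%:R * \det (Vandermonde n (\row_l x l)).
Proof.
apply: (can_inj (signrMK n)).
under eq_bigr => t _ do rewrite -det_col_mix_shift_Vandermonde.
rewrite sum_perm_det_col_mix mulrA -sum_sign_cardX_self mulr_suml.
apply: eq_bigr => S _; rewrite -mulmx_suml det_mulmx det_sum_shift_mx.
by rewrite mulrA.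
Qed.

Lemma Delta_det_Vandermonde (n : nat) (y : 'I_n -> int) :
  Delta y = \det (Vandermonde n (\row_l y l)).
Proof.
by rewrite det_Vandermonde; apply: eq_bigr => v _; apply: eq_bigr => w _; rewrite !mxE.
Qed.

Lemma sum_sgnp_Delta_shift (n : nat) (x c : 'I_n -> int) :
  \sum_(t : 'S_n) sgnp t * Delta (fun l => x ((t^-1)%g l) - c l) = n`!%:R * Delta x.
Proof.
rewrite Delta_det_Vandermonde -(sum_perm_det_Vandermonde_shift x c).
by apply: eq_bigr => t _; rewrite Delta_det_Vandermonde.
Qed.

Lemma eq_Delta (n : nat) (y z : 'I_n -> int) : y =1 z -> Delta y = Delta z.
Proof.
by move=> eq_yz; apply: eq_bigr => v _; apply: eq_bigr => w _; rewrite !eq_yz.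
Qed.

Theorem lemma6p3 (s : nat) (hs : (1 <= s)%N) (Gamma alpha : 'I_s -> int) (u : nat)
  (Pi : {set 'I_s}) (hPi : (u < #|Pi|)%N) :
  \sum_(sigma : {perm 'I_s}) \sum_(M : {set 'I_s} | M \subset Pi)
     (-1) ^+ #|M| * sgnp sigma
     * Delta (fun l => perm_act_alpha sigma alpha Gamma l - indic M l)
     * (#|M|%:R) ^+ u = 0 :> int.
Proof.
pose x l := Gamma l + alpha l.
have inner_sum (M : {set 'I_s}) :
    \sum_(sigma : 'S_s)
      sgnp sigma * Delta (fun l => perm_act_alpha sigma alpha Gamma l - indic M l)
    = s`!%:R * Delta x.
  rewrite -(sum_sgnp_Delta_shift x (fun l => alpha l + indic M l)).
  apply: eq_bigr => sigma _; congr (_ * _); apply: eq_Delta => l.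
  by rewrite /perm_act_alpha /perm_act /x opprD addrA.
rewrite exchange_big /=; transitivity
  (\sum_(M : {set 'I_s} | M \subset Pi) (-1) ^+ #|M| * #|M|%:R ^+ u * (s`!%:R * Delta x)).
  apply: eq_bigr => M _; rewrite -(inner_sum M) !mulr_sumr; apply: eq_bigr => sigma _.
  by rewrite mulrAC -!mulrA; congr (_ * _); exact: mulrCA.
by rewrite -mulr_suml sum_sign_cardX_eq0 ?mul0r.
Qed.
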